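(* Let $r,s$ be real numbers with $s > 3\sqrt{3}\, r > 0$, and let $C_{r,s} \subset \mathbb{P}^2$ be the nonsingular projective cubic $s(xyz - r^2 z^3) = x^2 y + x y^2$, with the group law on its real points in which the identity is $[1,-1,0]$ and $P+Q$ is the reflection in the line $y=x$ of the third intersection point of $C_{r,s}$ with the line through $P$ and $Q$ (tangent line if $P=Q$). Then no affine point $(x,y)$ of $C_{r,s}$ with $x>0$ and $y>0$ has finite odd order in this group.
   Context: Points $(x,y)$ on $C_{r,s}$ with $x>0,y>0$ are called triangle points. *)

From Stdlib Require Import Reals Lra.
Open Scope R_scope.

(* Points of the projective plane are represented by nonzero triples in R^3. *)
Definition pt : Type := (R * R * R)%type.

Definition px (P : pt) : R := fst (fst P).
Definition py (P : pt) : R := snd (fst P).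
Definition pz (P : pt) : R := snd P.

Definition nonzero (P : pt) : Prop := ~ (px P = 0 /\ py P = 0 /\ pz P = 0).

Definition proj_eq (P Q : pt) : Prop :=
  nonzero P /\ exists t : R, t <> 0 /\ Q = (t * px P, t * py P, t * pz P).

Definition F (r s : R) (P : pt) : R :=
  let x := px P in let y := py P in let z := pz P in
  s * (x * y * z - r ^ 2 * z ^ 3) - (x ^ 2 * y + x * y ^ 2).

Definition on_curve (r s : R) (P : pt) : Prop := nonzero P /\ F r s P = 0.

Definition lin2 (a : R) (A : pt) (b : R) (B : pt) : pt :=
  (a * px A + b * px B, a * py A + b * py B, a * pz A + b * pz B).

(* A and B are linearly independent in R^3 (cross product nonzero) *)
Definition indep (A B : pt) : Prop :=
  nonzero (py A * pz B - pz A * py B,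
           pz A * px B - px A * pz B,
           px A * py B - py A * px B).

(* P + Q + R is the intersection divisor of C_{r,s} with a line:
   the line spanned by A, B contains P, Q, R, and the restriction of the cubic
   form to the line factors as the product of the linear forms vanishing at
   P, Q, R (counted with multiplicity).  Thus R is the third intersection point
   of C with the line through P and Q (the tangent line if P = Q). *)
Definition third_point (r s : R) (P Q Rr : pt) : Prop :=
  on_curve r s P /\ on_curve r s Q /\ on_curve r s Rr /\
  exists (A B : pt) (a1 b1 a2 b2 a3 b3 k : R),
    indep A B /\ k <> 0 /\
    P = lin2 a1 A b1 B /\ Q = lin2 a2 A b2 B /\ Rr = lin2 a3 A b3 B /\
    forall l m : R,
      F r s (lin2 l A m B) =
        k * (b1 * l - a1 * m) * (b2 * l - a2 * m) * (b3 * l - a3 * m).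

Definition swap (P : pt) : pt := (py P, px P, pz P).

Definition sum_rel (r s : R) (P Q S : pt) : Prop :=
  exists Rr, third_point r s P Q Rr /\ proj_eq (swap Rr) S.

Definition origin : pt := (1, -1, 0).

Inductive mult (r s : R) : nat -> pt -> pt -> Prop :=
| mult_one : forall P, on_curve r s P -> mult r s 1 P P
| mult_succ : forall n P T U, mult r s n P T -> sum_rel r s T P U ->
    mult r s (S n) P U.

Definition is_mult_zero (r s : R) (n : nat) (P : pt) : Prop :=
  exists S, mult r s n P S /\ proj_eq origin S.

Definition has_order (r s : R) (P : pt) (n : nat) : Prop :=
  (0 < n)%nat /\ is_mult_zero r s n P /\
  forall m : nat, (0 < m < n)%nat -> ~ is_mult_zero r s m P.

(* The sign of [qform] is a character of the group of real points: for a line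
   meeting the cubic in P, Q, R, evaluating the cubic form at the points where the
   line crosses x + y = 0 and the flex tangent x + y = s z at the identity shows
   that qform P * qform Q * qform R >= 0.  As qform is invariant under the
   reflection, negative at triangle points and vanishes on the curve only at the
   identity, the multiples k P of a triangle point P of order n satisfy
   qform (k P) < 0 for k odd and qform (k P) > 0 for k even, k < n.  Hence n P,
   at which qform vanishes, cannot be an odd multiple. *)

From Stdlib Require Import Reals Lra Psatz.
Open Scope R_scope.

Definition lform (u v w : R) (P : pt) : R := u * px P + v * py P + w * pz P.

Definition qform (s : R) (P : pt) : R := lform 1 1 0 P * lform 1 1 (- s) P.

Definition det3 (P Q T : pt) : R :=
  px P * (py Q * pz T - pz Q * py T) - py P * (px Q * pz T - pz Q * px T)
  + pz P * (px Q * py T - py Q * px T).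

Lemma lform_lin2 u v w a A b B :
  lform u v w (lin2 a A b B) = a * lform u v w A + b * lform u v w B.
Proof. unfold lform, lin2, px, py, pz; simpl; ring. Qed.

Lemma det3_lin2 A B a1 b1 a2 b2 a3 b3 :
  det3 (lin2 a1 A b1 B) (lin2 a2 A b2 B) (lin2 a3 A b3 B) = 0.
Proof. unfold det3, lin2, px, py, pz; simpl; ring. Qed.

Lemma qform_swap s P : qform s (swap P) = qform s P.
Proof. destruct P as [[x y] z]; unfold qform, lform, swap, px, py, pz; simpl; ring. Qed.

Lemma qform_proj_eq_swap s P U :
  proj_eq (swap P) U -> exists c, 0 < c /\ qform s U = c * qform s P.
Proof.
  intros [_ [t [Ht ->]]].
  exists (t * t); split; [exact (Rlt_0_sqr t Ht) |].
  rewrite <- (qform_swap s P).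
  destruct (swap P) as [[x y] z]; unfold qform, lform, px, py, pz; simpl; ring.
Qed.

Lemma on_curve_proj_eq_swap r s P U :
  on_curve r s P -> proj_eq (swap P) U -> on_curve r s U.
Proof.
  destruct P as [[x y] z]; unfold on_curve, nonzero, swap, px, py, pz; simpl.
  intros [Hnz HF] [_ [t [Ht ->]]]; simpl; split.
  - intros (Hy & Hx & Hz); apply Hnz.
    apply Rmult_integral in Hx as [|]; [contradiction |].
    apply Rmult_integral in Hy as [|]; [contradiction |].
    apply Rmult_integral in Hz as [|]; [contradiction |].
    auto.
  - unfold F, px, py, pz in *; cbn [fst snd] in *.
    transitivity (t ^ 3 * (s * (x * y * z - r ^ 2 * z ^ 3) - (x ^ 2 * y + x * y ^ 2)));
      [ring | rewrite HF; ring].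
Qed.

Lemma F_on_antidiagonal r s x z : F r s (x, - x, z) = - s * z * (x ^ 2 + r ^ 2 * z ^ 2).
Proof. unfold F, px, py, pz; cbn [fst snd]; ring. Qed.

Lemma F_on_flex_tangent r s x y z :
  x + y = s * z -> F r s (x, y, z) = - s * r ^ 2 * z ^ 3.
Proof.
  intros Hxy; unfold F, px, py, pz; cbn [fst snd].
  replace y with (s * z - x) by lra; ring.
Qed.

Lemma F_mul_F_nonneg r s P Q :
  lform 1 1 0 P = 0 -> lform 1 1 (- s) Q = 0 -> pz P = pz Q ->
  0 <= F r s P * F r s Q.
Proof.
  destruct P as [[x y] z], Q as [[x' y'] z'].
  unfold lform, px, py, pz; cbn [fst snd]; intros HP HQ <-.
  replace y with (- x) by lra.
  rewrite F_on_antidiagonal, (F_on_flex_tangent r s x' y' z) by lra.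
  replace (- s * z * (x ^ 2 + r ^ 2 * z ^ 2) * (- s * r ^ 2 * z ^ 3))
    with ((s * r * z ^ 2) ^ 2 * (x ^ 2 + r ^ 2 * z ^ 2)) by ring.
  apply Rmult_le_pos; [apply pow2_ge_0 | nra].
Qed.

Lemma F_at_lform_root r s A B a1 b1 a2 b2 a3 b3 k u v w :
  (forall l m, F r s (lin2 l A m B) =
     k * (b1 * l - a1 * m) * (b2 * l - a2 * m) * (b3 * l - a3 * m)) ->
  F r s (lin2 (lform u v w B) A (- lform u v w A) B) =
    k * lform u v w (lin2 a1 A b1 B) * lform u v w (lin2 a2 A b2 B)
      * lform u v w (lin2 a3 A b3 B).
Proof. intros HF; rewrite HF, !lform_lin2; ring. Qed.

Lemma third_point_qform_nonneg r s P Q T :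
  third_point r s P Q T -> 0 <= qform s P * qform s Q * qform s T.
Proof.
  intros (_ & _ & _ & A & B & a1 & b1 & a2 & b2 & a3 & b3 & k & _ & Hk & -> & -> & -> & HF).
  pose proof (F_at_lform_root _ _ _ _ _ _ _ _ _ _ _ 1 1 0 HF) as H1.
  pose proof (F_at_lform_root _ _ _ _ _ _ _ _ _ _ _ 1 1 (- s) HF) as H2.
  assert (Hprod : F r s (lin2 (lform 1 1 0 B) A (- lform 1 1 0 A) B)
                * F r s (lin2 (lform 1 1 (- s) B) A (- lform 1 1 (- s) A) B)
                = (k * k) * (qform s (lin2 a1 A b1 B) * qform s (lin2 a2 A b2 B)
                             * qform s (lin2 a3 A b3 B))).
  { rewrite H1, H2; unfold qform; ring. }
  assert (Hnonneg := F_mul_F_nonneg r s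
    (lin2 (lform 1 1 0 B) A (- lform 1 1 0 A) B)
    (lin2 (lform 1 1 (- s) B) A (- lform 1 1 (- s) A) B)).
  rewrite Hprod in Hnonneg.
  pose proof (Rlt_0_sqr k Hk) as Hk2; unfold Rsqr in Hk2.
  apply (Rmult_le_reg_l (k * k)); [exact Hk2 |].
  rewrite Rmult_0_r; apply Hnonneg;
    rewrite ?lform_lin2; unfold lform, lin2, px, py, pz; cbn [fst snd]; ring.
Qed.

Lemma on_curve_qform_eq0 r s P :
  0 < r -> 0 < s -> on_curve r s P -> qform s P = 0 -> proj_eq origin P.
Proof.
  destruct P as [[x y] z].
  unfold on_curve, qform, lform, nonzero, px, py, pz; cbn [fst snd].
  intros Hr Hs [Hnz HF] Hq.
  assert (Hz : z = 0).
  { destruct (Req_dec z 0) as [| Hz]; [assumption | exfalso].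
    pose proof (Rlt_0_sqr z Hz) as Hz2; unfold Rsqr in Hz2.
    assert (Hr2 : 0 < r * r) by nra.
    apply Rmult_integral in Hq as [Hq | Hq].
    - replace y with (- x) in HF by lra.
      rewrite F_on_antidiagonal in HF.
      assert (Hpos : 0 < s * (z * z) * (x ^ 2 + r ^ 2 * z ^ 2)) by
        (apply Rmult_lt_0_compat; nra).
      replace (s * (z * z) * (x ^ 2 + r ^ 2 * z ^ 2))
        with (- z * (- s * z * (x ^ 2 + r ^ 2 * z ^ 2))) in Hpos by ring.
      rewrite HF, Rmult_0_r in Hpos; lra.
    - rewrite (F_on_flex_tangent r s x y z) in HF by lra.
      assert (Hpos : 0 < s * (r * r) * ((z * z) * (z * z))) by
        (apply Rmult_lt_0_compat; nra).
      replace (s * (r * r) * ((z * z) * (z * z)))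
        with (- z * (- s * r ^ 2 * z ^ 3)) in Hpos by ring.
      rewrite HF, Rmult_0_r in Hpos; lra. }
  subst z.
  assert (Hy : y = - x) by nra; subst y.
  split.
  - intros [H1 _]; unfold px, origin in H1; cbn [fst snd] in H1; lra.
  - exists x; split.
    + intros ->; apply Hnz; unfold px, py, pz; cbn [fst snd]; repeat split; lra.
    + unfold origin, px, py, pz; cbn [fst snd]; f_equal; [f_equal |]; ring.
Qed.

Lemma qform_proj_eq_origin s P : proj_eq origin P -> qform s P = 0.
Proof. intros [_ [t [_ ->]]]; unfold qform, lform, origin, px, py, pz; cbn [fst snd]; ring. Qed.

(* With x y > 0 the curve equation reads x y (x + y) = s (x y - r^2) < s x y. *)
Lemma qform_triangle_point_neg r s x y :
  0 < r -> 0 < s -> F r s (x, y, 1) = 0 -> 0 < x -> 0 < y -> qform s (x, y, 1) < 0.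
Proof.
  unfold F, qform, lform, px, py, pz; cbn [fst snd]; intros Hr Hs HF Hx Hy.
  assert (Hxy : 0 < x * y) by nra.
  assert (Hsr : 0 < s * r ^ 2) by (apply Rmult_lt_0_compat; nra).
  assert (Hlt : x * y * (x + y) < x * y * s) by nra.
  apply Rmult_lt_reg_l in Hlt; [nra | exact Hxy].
Qed.

(* The hypothesis says that P, Q and the identity [1, -1, 0] are collinear. *)
Lemma qform_mul_nonneg s P Q :
  lform 1 1 0 P * pz Q = pz P * lform 1 1 0 Q -> 0 <= qform s P * qform s Q.
Proof.
  unfold qform; set (a := lform 1 1 0 P); set (c := lform 1 1 0 Q); intros H.
  replace (lform 1 1 (- s) P) with (a - s * pz P) by (unfold a, lform; ring).
  replace (lform 1 1 (- s) Q) with (c - s * pz Q) by (unfold c, lform; ring).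
  replace (a * (a - s * pz P) * (c * (c - s * pz Q)))
    with ((c * (a - s * pz P)) ^ 2 + s * c * (a - s * pz P) * (pz P * c - a * pz Q))
    by ring.
  rewrite H, Rminus_diag, Rmult_0_r, Rplus_0_r; apply pow2_ge_0.
Qed.

Lemma third_point_origin_qform_nonneg r s P Q T :
  third_point r s P Q T -> proj_eq origin T -> 0 <= qform s P * qform s Q.
Proof.
  intros (_ & _ & _ & A & B & a1 & b1 & a2 & b2 & a3 & b3 & _ & _ & _ & HP & HQ & HT & _)
         [_ [t [Ht HTo]]].
  assert (Hdet : det3 P Q T = 0) by (rewrite HP, HQ, HT; apply det3_lin2).
  rewrite HTo in Hdet.
  apply qform_mul_nonneg, (Rmult_eq_reg_l t); [| exact Ht].
  unfold det3, lform, origin, px, py, pz in *; cbn [fst snd] in *; lra.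
Qed.

Lemma sum_rel_on_curve r s P Q U : sum_rel r s P Q U -> on_curve r s U.
Proof. intros [T [(_ & _ & HT & _) HU]]; exact (on_curve_proj_eq_swap r s T U HT HU). Qed.

Lemma sum_rel_qform_neg_neg r s P Q U :
  sum_rel r s P Q U -> qform s P < 0 -> qform s Q < 0 -> 0 <= qform s U.
Proof.
  intros [T [HT HU]] HP HQ.
  pose proof (third_point_qform_nonneg r s P Q T HT) as Hprod.
  destruct (qform_proj_eq_swap s T U HU) as [c [Hc ->]].
  assert (0 < qform s P * qform s Q) by nra.
  assert (0 <= qform s T) by nra.
  nra.
Qed.

Lemma sum_rel_qform_pos_neg r s P Q U :
  0 < r -> 0 < s ->
  sum_rel r s P Q U -> 0 < qform s P -> qform s Q < 0 -> qform s U < 0.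
Proof.
  intros Hr Hs [T [HT HU]] HP HQ.
  pose proof (third_point_qform_nonneg r s P Q T HT) as Hprod.
  destruct (qform_proj_eq_swap s T U HU) as [c [Hc ->]].
  assert (HPQ : qform s P * qform s Q < 0) by nra.
  assert (HTnz : qform s T <> 0).
  { intros HT0.
    pose proof (third_point_origin_qform_nonneg r s P Q T HT) as Horig.
    destruct HT as (_ & _ & HTc & _).
    specialize (Horig (on_curve_qform_eq0 r s T Hr Hs HTc HT0)); lra. }
  assert (qform s T < 0) by nra.
  nra.
Qed.

Lemma mult_qform_sign r s n k P S :
  mult r s k P S -> 0 < r -> 0 < s -> qform s P < 0 ->
  (forall m, (0 < m < n)%nat -> ~ is_mult_zero r s m P) -> (k <= n)%nat ->
  (Nat.odd k = true -> qform s S < 0) /\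
  (Nat.odd k = false -> (k < n)%nat -> 0 < qform s S).
Proof.
  intros Hm Hr Hs HP Hmin.
  induction Hm as [P _ | k P T U Hm IH Hsum]; intros Hk.
  - split; [intros _; exact HP | discriminate].
  - destruct (IH HP Hmin ltac:(lia)) as [IHodd IHeven].
    rewrite Nat.odd_succ, <- Nat.negb_odd.
    destruct (Nat.odd k); cbn [negb]; split; try discriminate.
    + intros _ Hkn.
      destruct (Rle_lt_or_eq_dec _ _ (sum_rel_qform_neg_neg r s T P U Hsum (IHodd eq_refl) HP))
        as [| HU0]; [assumption | exfalso].
      apply (Hmin (S k)); [lia |].
      exists U; split; [econstructor; eassumption |].
      exact (on_curve_qform_eq0 r s U Hr Hs (sum_rel_on_curve r s T P U Hsum) (eq_sym HU0)).
    + intros _.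
      exact (sum_rel_qform_pos_neg r s T P U Hr Hs Hsum (IHeven eq_refl ltac:(lia)) HP).
Qed.

Theorem corollary3 (r s x y : R) :
  0 < 3 * sqrt 3 * r -> 3 * sqrt 3 * r < s ->
  F r s (x, y, 1) = 0 -> 0 < x -> 0 < y ->
  forall n : nat, has_order r s (x, y, 1) n -> Nat.odd n = false.
Proof.
  intros Hr3 Hs3 HF Hx Hy n (_ & (S & Hm & HS) & Hmin).
  assert (Hsqrt3 : 0 < 3 * sqrt 3) by (apply Rmult_lt_0_compat; [lra | apply sqrt_lt_R0; lra]).
  assert (Hr : 0 < r) by nra.
  assert (Hs : 0 < s) by lra.
  pose proof (qform_triangle_point_neg r s x y Hr Hs HF Hx Hy) as HP.
  destruct (mult_qform_sign r s n n _ S Hm Hr Hs HP Hmin (le_n n)) as [Hodd _].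
  destruct (Nat.odd n); [exfalso | reflexivity].
  specialize (Hodd eq_refl).
  rewrite (qform_proj_eq_origin s S HS) in Hodd; lra.
Qed.
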